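(* Let $(C,\delta)$ be an $N$-codifferential graded coalgebra. Then: 1. $\mathrm{End}(C)$, with composition as product and differential $d(f)=\delta\circ f-(-1)^{\bar f}f\circ\delta$, is a $(2N-1)$-differential graded algebra. 2. $\mathrm{Coder}(C)\subseteq\mathrm{End}(C)$, with the graded commutator $[f,g]=f\circ g-(-1)^{\bar f\bar g}g\circ f$ and the same $d$, is a $(2N-1)$-differential graded Lie algebra.
   Context: All vector spaces are $\mathbb{Z}$-graded over a field $k$ of characteristic zero, and $\bar f$ denotes degree. A graded coalgebra is a graded vector space $C$ with a degree-zero coassociative map $\Delta:C\to C\otimes C$. A coderivation of $C$ is a linear map $\delta:C\to C$ with $\Delta\circ\delta=(1\otimes\delta+\delta\otimes1)\circ\Delta$, using Koszul signs. $\mathrm{Coder}(C)$ denotes the space of coderivations. An $N$-codifferential graded coalgebra is a pair $(C,\delta)$ where $C$ is a graded coalgebra and $\delta$ is a degree-one coderivation with $\delta^N=0$. $\mathrm{End}(C)$ is the graded space of graded linear endomorphisms of $C$. A $K$-differential graded algebra is a graded associative algebra with a degree-one map $d$ satisfying $d(ab)=d(a)b+(-1)^{\bar a}a\,d(b)$ and $d^K=0$. A $K$-differential graded Lie algebra is a graded Lie algebra with a degree-one map $d$ satisfying $d[a,b]=[da,b]+(-1)^{\bar a}[a,db]$ and $d^K=0$. *)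

From HB Require Import structures.
From mathcomp Require Import all_boot all_order all_algebra.
Set Implicit Arguments. Unset Strict Implicit. Unset Printing Implicit Defensive.
Import Order.TTheory GRing.Theory Num.Theory.
Local Open Scope ring_scope.

(* Graded vector spaces are modelled as a k-module C together with a family of
   projections pi i (i : int) realising a direct-sum decomposition
   C = (+)_i C_i with C_i = image of pi i. *)
Section Defs.
Variables (k : fieldType) (C : lmodType k).

Definition lin (f : C -> C) : Prop :=
  forall (a : k) (x y : C), f (a *: x + y) = a *: f x + f y.

Definition grading (pi : int -> C -> C) : Prop :=
  [/\ forall i, lin (pi i),
      forall i j x, pi i (pi j x) = (if i == j then pi j x else 0) &
      forall x, exists s : seq int,
        [/\ uniq s, x = \sum_(i <- s) pi i x & forall i, i \notin s -> pi i x = 0]].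

Definition homog (pi : int -> C -> C) (n : int) (x : C) : Prop := pi n x = x.

Definition gmap (pi : int -> C -> C) (m : int) (f : C -> C) : Prop :=
  lin f /\ forall i x, homog pi i x -> homog pi (i + m) (f x).

(* Tensors in C (x) C are represented by finite lists of pure tensors;
   two tensors are equal iff all bilinear forms agree on them (valid over a field). *)
Definition bilin (b : C -> C -> k) : Prop :=
  (forall y a x x', b (a *: x + x') y = a * b x y + b x' y) /\
  (forall x a y y', b x (a *: y + y') = a * b x y + b x y').

Definition trilin (t : C -> C -> C -> k) : Prop :=
  [/\ forall y z a x x', t (a *: x + x') y z = a * t x y z + t x' y z,
      forall x z a y y', t x (a *: y + y') z = a * t x y z + t x y' z &
      forall x y a z z', t x y (a *: z + z') = a * t x y z + t x y z'].

Definition tev (b : C -> C -> k) (t : seq (C * C)) : k := \sum_(p <- t) b p.1 p.2.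

(* f (x) g without Koszul sign, applied to a representing list *)
Definition tmap (f g : C -> C) (t : seq (C * C)) : seq (C * C) :=
  [seq (f p.1, g p.2) | p <- t].

Definition graded_coalgebra (pi : int -> C -> C) (Delta : C -> seq (C * C)) : Prop :=
  [/\ grading pi,
      forall b, bilin b -> forall a x y,
        tev b (Delta (a *: x + y)) = a * tev b (Delta x) + tev b (Delta y),
      forall n x, homog pi n x -> forall i j, i + j != n ->
        forall b, bilin b -> tev b (tmap (pi i) (pi j) (Delta x)) = 0 &
      forall t, trilin t -> forall x,
        \sum_(p <- Delta x) \sum_(q <- Delta p.1) t q.1 q.2 p.2 =
        \sum_(p <- Delta x) \sum_(q <- Delta p.2) t p.1 q.1 q.2].

(* f is a coderivation of degree m:
   Delta o f = (1 (x) f + f (x) 1) o Delta, with Koszul sign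
   (1 (x) f)(a (x) b) = (-1)^(m |a|) a (x) f b; checked on each
   bihomogeneous component C_i (x) C_j. *)
Definition coder (pi : int -> C -> C) (Delta : C -> seq (C * C)) (m : int)
    (f : C -> C) : Prop :=
  gmap pi m f /\
  forall b, bilin b -> forall (i j : int) x,
    tev b (tmap (pi i) (pi j) (Delta (f x))) =
      (-1) ^ (m * i) * tev b (tmap (pi i) (pi j \o f) (Delta x))
      + tev b (tmap (pi i \o f) (pi j) (Delta x)).

Definition N_codiff (pi : int -> C -> C) (Delta : C -> seq (C * C))
    (delta : C -> C) (N : nat) : Prop :=
  [/\ graded_coalgebra pi Delta, coder pi Delta 1 delta &
      forall x, iter N delta x = 0].

Definition dEnd (delta : C -> C) (m : int) (f : C -> C) : C -> C :=
  fun x => delta (f x) - (-1) ^ m *: f (delta x).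

Fixpoint dpow (delta : C -> C) (m : int) (n : nat) (f : C -> C) : C -> C :=
  if n is n'.+1 then dEnd delta (m + n'%:Z) (dpow delta m n' f) else f.

Definition gbr (m n : int) (f g : C -> C) : C -> C :=
  fun x => f (g x) - (-1) ^ (m * n) *: g (f x).

End Defs.

From HB Require Import structures.
From mathcomp Require Import all_boot all_order all_algebra.
From mathcomp Require Import ring zify.
From Stdlib Require Import FunctionalExtensionality.
Import Order.TTheory GRing.Theory Num.Theory.
Local Open Scope ring_scope.
Set Implicit Arguments. Unset Strict Implicit.

(* The differential is the graded commutator with the degree-one element
   delta, d f = [delta, f], so the Leibniz rules are instances of the formal
   identities of composition and of the graded Jacobi identity.
   Coderivations are closed under the graded commutator: expanding
   Delta (f g x) with the coderivation rule twice, the cross terms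
   (g (x) f) and (f (x) g) of f g and of g f cancel in [f, g] thanks to the
   Koszul signs.  Hence Coder(C) is also stable under d.  Nilpotency: by
   induction d^n f is a linear combination of the maps delta^i f delta^j
   with i + j = n, and for n = 2N - 1 one of i, j is at least N. *)

Section LinearMaps.
Variables (k : fieldType) (C : lmodType k).
Implicit Types (f g : C -> C).

Definition linmap f (hf : lin f) : {linear C -> C} :=
  HB.pack f (GRing.isLinear.Build k C C *:%R f hf).

Lemma lin0 f : lin f -> f 0 = 0.
Proof. by move=> hf; have := raddf0 (linmap hf). Qed.

Lemma linB f : lin f -> {morph f : x y / x - y}.
Proof. by move=> hf; have := raddfB (linmap hf). Qed.

Lemma linZ f a : lin f -> {morph f : x / a *: x}.
Proof. by move=> hf; have := linearZZ (linmap hf) a. Qed.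

Lemma lin_sum f (I : Type) (s : seq I) (F : I -> C) : lin f ->
  f (\sum_(i <- s) F i) = \sum_(i <- s) f (F i).
Proof. by move=> hf; have := raddf_sum (linmap hf). Qed.

Lemma eq_lin f g : f =1 g -> lin f -> lin g.
Proof. by move=> fg hf a x y; rewrite -!fg. Qed.

Lemma lin_comp f g : lin f -> lin g -> lin (f \o g).
Proof. by move=> hf hg a x y /=; rewrite hg hf. Qed.

Lemma lin_lincomb a f g : lin f -> lin g -> lin (fun x => a *: f x + g x).
Proof.
move=> hf hg c x y; rewrite hf hg scalerDr addrACA !scalerA mulrC.
by rewrite -scalerA -scalerDr.
Qed.

Lemma sign_cases (z : int) : (-1 : k) ^ z = 1 \/ (-1 : k) ^ z = -1.
Proof.
case: z => n; rewrite /exprz -signr_odd; case: (odd _);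
  by [right; rewrite ?expr1 ?invrN1 | left; rewrite ?expr0 ?invr1].
Qed.

Lemma signD (a b : int) : (-1 : k) ^ (a + b) = (-1) ^ a * (-1) ^ b.
Proof. by rewrite expfzDr // oppr_eq0 oner_eq0. Qed.

Lemma signN (a : int) : (-1 : k) ^ (- a) = (-1) ^ a.
Proof. by rewrite -invr_expz; case: (sign_cases a) => ->; rewrite ?invr1 ?invrN1. Qed.

Definition lcomb (v : nat -> C) (c : nat -> k) : C := \sum_(i < 6) c i *: v i.

Lemma lcombD v c d : lcomb v c + lcomb v d = lcomb v (fun i => c i + d i).
Proof. by rewrite /lcomb -big_split; apply: eq_bigr => i _; rewrite scalerDl. Qed.

Lemma lcombZ v a c : a *: lcomb v c = lcomb v (fun i => a * c i).
Proof. by rewrite /lcomb scaler_sumr; apply: eq_bigr => i _; rewrite scalerA. Qed.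

Lemma lcombN v c : - lcomb v c = lcomb v (fun i => - c i).
Proof. by rewrite /lcomb -sumrN; apply: eq_bigr => i _; rewrite scaleNr. Qed.

Lemma lcomb0 v : 0 = lcomb v (fun _ => 0).
Proof. by rewrite /lcomb big1 // => i _; rewrite scale0r. Qed.

Lemma lcomb_unit v i : (i < 6)%N -> v i = lcomb v (fun j => (j == i)%:R).
Proof.
move=> lt_i6; rewrite /lcomb !big_ord_recr big_ord0 /=.
by case: i lt_i6 => [|[|[|[|[|[|i]]]]]] //= _; rewrite !scale0r ?scale1r !(add0r, addr0).
Qed.

Lemma eq_lcomb v c d : (forall i, (i < 6)%N -> c i = d i) -> lcomb v c = lcomb v d.
Proof. by move=> cd; apply: eq_bigr => i _; rewrite cd. Qed.

End LinearMaps.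

(* Identities of an lmodType involving at most six vectors [atoms]: each atom
   is written as a coordinate vector of [lcomb], both sides become [lcomb]s,
   and the coefficients are compared with [ring]. *)
Ltac lcomb_fold v i atoms :=
  lazymatch atoms with
  | ?a :: ?atoms' => rewrite (_ : a = v i) //; lcomb_fold v (S i) atoms'
  | _ => idtac
  end.

Ltac lcomb_ring atoms :=
  let v := fresh "v" in
  pose v := nth 0 atoms; lcomb_fold v 0%N atoms;
  rewrite ?(@lcomb_unit _ _ v 0%N isT) ?(@lcomb_unit _ _ v 1%N isT)
          ?(@lcomb_unit _ _ v 2%N isT) ?(@lcomb_unit _ _ v 3%N isT)
          ?(@lcomb_unit _ _ v 4%N isT) ?(@lcomb_unit _ _ v 5%N isT) //;
  rewrite ?(lcombZ, lcombN, lcombD) ?(lcomb0 v);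
  apply: eq_lcomb; case=> [|[|[|[|[|[|?]]]]]] ? /=; [..|by []]; ring.

Section BracketIdentities.
Variables (k : fieldType) (C : lmodType k) (delta : C -> C).
Hypothesis delta_lin : lin delta.
Implicit Types (f g h : C -> C) (m n p : int).

Lemma gbrE m n f g x : gbr m n f g x = (- (-1) ^ (m * n)) *: g (f x) + f (g x).
Proof. by rewrite /gbr scaleNr addrC. Qed.

Lemma dEnd_bracket m f : dEnd delta m f = gbr 1 m delta f.
Proof. by apply: functional_extensionality => x; rewrite /dEnd /gbr mul1r. Qed.

Lemma dEnd_lincomb m a f g :
  dEnd delta m (fun x => a *: f x + g x)
  =1 (fun x => a *: dEnd delta m f x + dEnd delta m g x).
Proof.
move=> x; rewrite /dEnd delta_lin.
by lcomb_ring [:: delta (f x); delta (g x); f (delta x); g (delta x)].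
Qed.

Lemma dEnd_comp m n f g : lin f ->
  dEnd delta (m + n) (f \o g)
  =1 (fun x => dEnd delta m f (g x) + (-1) ^ m *: f (dEnd delta n g x)).
Proof.
move=> hf x; rewrite /dEnd /= signD (linB hf) (linZ _ hf).
by lcomb_ring [:: delta (f (g x)); f (delta (g x)); f (g (delta x))].
Qed.

Lemma gbr_antisym m n f g : gbr m n f g =1 (fun x => - ((-1) ^ (m * n) *: gbr n m g f x)).
Proof.
move=> x; rewrite /gbr (mulrC n m).
by case: (sign_cases k (m * n)) => ->; lcomb_ring [:: f (g x); g (f x)].
Qed.

Lemma gbr_jacobi m n p f g h : lin f -> lin g -> lin h ->
  (fun x => (-1) ^ (m * p) *: gbr m (n + p) f (gbr n p g h) x
          + (-1) ^ (n * m) *: gbr n (p + m) g (gbr p m h f) x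
          + (-1) ^ (p * n) *: gbr p (m + n) h (gbr m n f g) x) =1 (fun _ => 0).
Proof.
move=> hf hg hh x /=; rewrite /gbr !(linB hf, linB hg, linB hh, linZ _ hf, linZ _ hg, linZ _ hh).
rewrite !mulrDr !signD (mulrC n m) (mulrC p m) (mulrC p n).
case: (sign_cases k (m * n)) => ->; case: (sign_cases k (n * p)) => ->;
  case: (sign_cases k (m * p)) => ->;
  by lcomb_ring [:: f (g (h x)); f (h (g x)); g (h (f x)); h (g (f x));
                    g (f (h x)); h (f (g x))].
Qed.

Lemma dEnd_gbr m n f g : lin f -> lin g ->
  dEnd delta (m + n) (gbr m n f g)
  =1 (fun x => gbr (m + 1) n (dEnd delta m f) g x
               + (-1) ^ m *: gbr m (n + 1) f (dEnd delta n g) x).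
Proof.
move=> hf hg x; rewrite /gbr /dEnd.
rewrite !(linB delta_lin, linB hf, linB hg, linZ _ delta_lin, linZ _ hf, linZ _ hg).
rewrite mulrDl mulrDr mul1r mulr1 !signD.
case: (sign_cases k (m * n)) => ->; case: (sign_cases k m) => ->;
  case: (sign_cases k n) => ->;
  by lcomb_ring [:: delta (f (g x)); delta (g (f x)); f (g (delta x));
                    g (f (delta x)); f (delta (g x)); g (delta (f x))].
Qed.

End BracketIdentities.

Section GradedMaps.
Variables (k : fieldType) (C : lmodType k) (pi : int -> C -> C).
Implicit Types (f g : C -> C) (m n : int).

Lemma eq_gmap m f g : f =1 g -> gmap pi m f -> gmap pi m g.
Proof.
move=> fg [hf df]; split=> [|i x hx]; first exact: eq_lin hf.
by rewrite -fg; apply: df.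
Qed.

Lemma gmap_id : gmap pi 0 id.
Proof. by split=> // i x; rewrite addr0. Qed.

Lemma gmap_comp m n f g : gmap pi m f -> gmap pi n g -> gmap pi (m + n) (f \o g).
Proof.
move=> [hf df] [hg dg]; split=> [|i x hx]; first exact: lin_comp.
by rewrite (addrC m) addrA; apply/df/dg.
Qed.

Hypothesis pi_grading : grading pi.

Lemma pi_lin i : lin (pi i).
Proof. by case: pi_grading. Qed.

Lemma homog_lincomb i a u v : homog pi i u -> homog pi i v -> homog pi i (a *: u + v).
Proof. by move=> hu hv; rewrite /homog pi_lin hu hv. Qed.

Lemma gmap_lincomb m a f g : gmap pi m f -> gmap pi m g ->
  gmap pi m (fun x => a *: f x + g x).
Proof.
move=> [hf df] [hg dg]; split=> [|i x hx]; first exact: lin_lincomb.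
by apply: homog_lincomb; [apply: df | apply: dg].
Qed.

Lemma gmap_gbr m n f g : gmap pi m f -> gmap pi n g -> gmap pi (m + n) (gbr m n f g).
Proof.
move=> gf gg; apply: eq_gmap (fun x => esym (gbrE m n f g x)) _.
by apply: gmap_lincomb; [rewrite addrC|]; apply: gmap_comp.
Qed.

Lemma gmap_dEnd delta m f : gmap pi 1 delta -> gmap pi m f ->
  gmap pi (m + 1) (dEnd delta m f).
Proof. by move=> gd gf; rewrite dEnd_bracket addrC; apply: gmap_gbr. Qed.

(* A map of degree m sends C_(j - m) into C_j and the other summands elsewhere. *)
Lemma pi_gmap m f j v : gmap pi m f -> pi j (f v) = f (pi (j - m) v).
Proof.
move=> [hf df]; have [_ pi_pi decomp] := pi_grading.
have [s [uniq_s v_sum pi_out]] := decomp v.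
have pi_f l : pi j (f (pi l v)) = if l == j - m then f (pi l v) else 0.
  have f_l : homog pi (l + m) (f (pi l v)) by apply: df; rewrite /homog pi_pi eqxx.
  by rewrite -{1}f_l pi_pi f_l (eq_sym l) subr_eq.
rewrite {1}v_sum (lin_sum _ _ hf) (lin_sum _ _ (pi_lin j)) (eq_bigr _ (fun l _ => pi_f l)).
have [s_jm|s'_jm] := boolP (j - m \in s).
  by rewrite (bigD1_seq (j - m)) //= eqxx big1 ?addr0 // => l /negbTE ->.
rewrite big1_seq ?pi_out ?lin0 // => l /andP[_ s_l].
by case: eqP => // l_jm; rewrite -l_jm s_l in s'_jm.
Qed.

End GradedMaps.

Section Nilpotency.
Variables (k : fieldType) (C : lmodType k) (delta f : C -> C).
Hypothesis delta_lin : lin delta.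

Inductive sandwich (n : nat) : (C -> C) -> Prop :=
| sandwich0 : sandwich n (fun _ => 0)
| sandwich_iter i j : (i + j)%N = n ->
    sandwich n (fun x => iter i delta (f (iter j delta x)))
| sandwich_lincomb a h1 h2 : sandwich n h1 -> sandwich n h2 ->
    sandwich n (fun x => a *: h1 x + h2 x).

Lemma sandwich_deltal n h : sandwich n h -> sandwich n.+1 (delta \o h).
Proof.
elim=> [|i j ij_n|a h1 h2 _ IH1 _ IH2].
- have -> : delta \o (fun _ : C => 0) = (fun _ : C => 0).
    by apply: functional_extensionality => x /=; rewrite lin0.
  exact: sandwich0.
- by apply: (@sandwich_iter _ i.+1 j); rewrite addSn ij_n.
- have -> : delta \o (fun x => a *: h1 x + h2 x)
            = (fun x => a *: (delta \o h1) x + (delta \o h2) x).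
    by apply: functional_extensionality => x /=; rewrite delta_lin.
  exact: sandwich_lincomb.
Qed.

Lemma sandwich_deltar n h : sandwich n h -> sandwich n.+1 (h \o delta).
Proof.
elim=> [|i j ij_n|a h1 h2 _ IH1 _ IH2]; [exact: sandwich0 | | exact: sandwich_lincomb].
have -> : (fun x => iter i delta (f (iter j delta x))) \o delta
          = (fun x => iter i delta (f (iter j.+1 delta x))).
  by apply: functional_extensionality => x; rewrite iterSr.
by apply: sandwich_iter; rewrite addnS ij_n.
Qed.

Lemma dpow_sandwich m n : sandwich n (dpow delta m n f).
Proof.
elim: n => [|n IH] /=; first exact: (@sandwich_iter _ 0 0).
have -> : dEnd delta (m + n%:Z) (dpow delta m n f)
          = (fun x => (- (-1) ^ (m + n%:Z)) *: (dpow delta m n f \o delta) x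
                      + (delta \o dpow delta m n f) x).
  by apply: functional_extensionality => x; rewrite /dEnd scaleNr addrC.
by apply: sandwich_lincomb; [apply: sandwich_deltar | apply: sandwich_deltal].
Qed.

Lemma iter_lin0 n : iter n delta 0 = 0.
Proof. by elim: n => //= n ->; rewrite lin0. Qed.

Lemma sandwich_nilpotent N h : lin f -> (forall x, iter N delta x = 0) ->
  sandwich (2 * N).-1 h -> h =1 (fun _ => 0).
Proof.
move=> hf deltaN; elim=> [|i j ij_n x|a h1 h2 _ IH1 _ IH2 x] //=; last first.
  by rewrite IH1 IH2 scaler0 addr0.
have [le_Ni|lt_iN] := leqP N i; first by rewrite -(subnK le_Ni) iterD deltaN iter_lin0.
have le_Nj : (N <= j)%N by lia.
by rewrite -(subnK le_Nj) iterD deltaN iter_lin0 lin0 // iter_lin0.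
Qed.

Lemma dpow_nilpotent N m : lin f -> (forall x, iter N delta x = 0) ->
  dpow delta m (2 * N).-1 f =1 (fun _ => 0).
Proof. by move=> hf deltaN; apply: sandwich_nilpotent (dpow_sandwich m _). Qed.

End Nilpotency.

Section Coderivations.
Variables (k : fieldType) (C : lmodType k) (pi : int -> C -> C)
  (Delta : C -> seq (C * C)).
Implicit Types (f g : C -> C) (al be : C -> C) (b : C -> C -> k) (m n : int).

(* Tensors are only observed through bilinear forms b, so (al (x) be) (Delta y)
   is known through the scalars [pairing b al be y]. *)
Definition pairing b al be (y : C) : k := tev b (tmap al be (Delta y)).

Lemma pairingE b al be y : pairing b al be y = \sum_(p <- Delta y) b (al p.1) (be p.2).
Proof. exact: big_map. Qed.

Lemma eq_pairing b al al' be be' y : al =1 al' -> be =1 be' ->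
  pairing b al be y = pairing b al' be' y.
Proof. by move=> eq_al eq_be; rewrite !pairingE; apply: eq_bigr => p _; rewrite eq_al eq_be. Qed.

Lemma bilin0r b x : bilin b -> b x 0 = 0.
Proof.
move=> [_ linr]; have := linr x 1 0 0; rewrite scale1r addr0 mul1r => b_x0.
by apply: (addrI (b x 0)); rewrite -b_x0 addr0.
Qed.

Lemma bilin0l b y : bilin b -> b 0 y = 0.
Proof.
move=> [linl _]; have := linl y 1 0 0; rewrite scale1r addr0 mul1r => b_0y.
by apply: (addrI (b 0 y)); rewrite -b_0y addr0.
Qed.

Lemma bilin_comp b al be : bilin b -> lin al -> lin be -> bilin (fun u v => b (al u) (be v)).
Proof. by move=> [linl linr] hal hbe; split=> x a y y'; rewrite ?hal ?hbe ?linl ?linr. Qed.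

Lemma pairing_lincombl b c al1 al2 be y : bilin b ->
  pairing b (fun u => c *: al1 u + al2 u) be y = c * pairing b al1 be y + pairing b al2 be y.
Proof.
by move=> [linl _]; rewrite !pairingE mulr_sumr -big_split; apply: eq_bigr => p _; rewrite linl.
Qed.

Lemma pairing_lincombr b c al be1 be2 y : bilin b ->
  pairing b al (fun v => c *: be1 v + be2 v) y = c * pairing b al be1 y + pairing b al be2 y.
Proof.
by move=> [_ linr]; rewrite !pairingE mulr_sumr -big_split; apply: eq_bigr => p _; rewrite linr.
Qed.

Hypothesis coalg : graded_coalgebra pi Delta.

Lemma pairing_lin b al be a x y : bilin b -> lin al -> lin be ->
  pairing b al be (a *: x + y) = a * pairing b al be x + pairing b al be y.
Proof.
move=> hb hal hbe; have [_ Delta_lin _ _] := coalg.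
by have := Delta_lin _ (bilin_comp hb hal hbe) a x y; rewrite !pairingE.
Qed.

Lemma pairing0 b al be : bilin b -> lin al -> lin be -> pairing b al be 0 = 0.
Proof.
move=> hb hal hbe; have := pairing_lin 1 0 0 hb hal hbe.
rewrite scale1r addr0 mul1r => pairing_0.
by apply: (addrI (pairing b al be 0)); rewrite -pairing_0 addr0.
Qed.

Let grading_pi : grading pi. Proof. by case: coalg. Qed.
Let lin_pi i : lin (pi i) := pi_lin grading_pi i.

Lemma coderP m f : coder pi Delta m f <->
  gmap pi m f /\ forall b, bilin b -> forall i j x,
    pairing b (pi i) (pi j) (f x) =
    (-1) ^ (m * i) * pairing b (pi i) (fun v => pi j (f v)) x
    + pairing b (fun u => pi i (f u)) (pi j) x.
Proof. by []. Qed.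

Lemma coder_pairing m f b al be i j x : coder pi Delta m f -> bilin b -> lin al -> lin be ->
  pairing b (fun u => al (pi i u)) (fun v => be (pi j v)) (f x) =
  (-1) ^ (m * i) * pairing b (fun u => al (pi i u)) (fun v => be (pi j (f v))) x
  + pairing b (fun u => al (pi i (f u))) (fun v => be (pi j v)) x.
Proof.
move=> [_ hf] hb hal hbe; move: (hf _ (bilin_comp hb hal hbe) i j x).
by rewrite /tev !big_map !pairingE.
Qed.

Lemma coder_comp m n f g b i j x : coder pi Delta m f -> coder pi Delta n g -> bilin b ->
  pairing b (pi i) (pi j) (f (g x)) =
  (-1) ^ (m * i) * ((-1) ^ (n * i) * pairing b (pi i) (fun v => f (g (pi (j - m - n) v))) x
     + pairing b (fun u => g (pi (i - n) u)) (fun v => f (pi (j - m) v)) x)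
  + ((-1) ^ (n * (i - m)) * pairing b (fun u => f (pi (i - m) u)) (fun v => g (pi (j - n) v)) x
     + pairing b (fun u => f (g (pi (i - m - n) u))) (pi j) x).
Proof.
move=> hf hg hb; have [[lf _] _] := hf.
have pi_f l v : pi l (f v) = f (pi (l - m) v)
  := pi_gmap grading_pi l v hf.1.
have pi_g l v : pi l (g v) = g (pi (l - n) v)
  := pi_gmap grading_pi l v hg.1.
rewrite (coder_pairing (al := id) (be := id) i j (g x) hf hb) //=.
rewrite (eq_pairing (be' := fun v => f (pi (j - m) v)) _ _ (frefl (pi i)) (pi_f j)).
rewrite (eq_pairing (al' := fun u => f (pi (i - m) u)) _ _ (pi_f i) (frefl (pi j))).
rewrite (coder_pairing (al := id) (be := f) i (j - m) x hg hb) //=.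
rewrite (coder_pairing (al := f) (be := id) (i - m) j x hg hb) //=.
by congr (_ * (_ * _ + _) + (_ * _ + _)); apply: eq_pairing => v; rewrite ?pi_g.
Qed.

Lemma coder0 m : coder pi Delta m (fun _ => 0).
Proof.
have pi0 i : pi i 0 = 0 by exact: lin0 (lin_pi i).
apply/coderP; split; first by split=> [a x y|i x _]; rewrite ?scaler0 ?addr0 // /homog pi0.
move=> b hb i j x; rewrite (pairing0 hb (lin_pi i) (lin_pi j)) !pairingE.
by rewrite !big1 ?mulr0 ?addr0 // => p _ /=; rewrite pi0 ?bilin0l ?bilin0r.
Qed.

Lemma coder_lincomb m a f g : coder pi Delta m f -> coder pi Delta m g ->
  coder pi Delta m (fun x => a *: f x + g x).
Proof.
move=> /coderP[gf cf] /coderP[gg cg]; apply/coderP; split; first exact: gmap_lincomb.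
move=> b hb i j x; rewrite (pairing_lin _ _ _ hb (lin_pi i) (lin_pi j)) cf // cg //.
rewrite (eq_pairing _ _ (frefl (pi i)) (fun v => lin_pi j a (f v) (g v))).
rewrite (eq_pairing _ _ (fun u => lin_pi i a (f u) (g u)) (frefl (pi j))).
by rewrite pairing_lincombl // pairing_lincombr //; ring.
Qed.

Lemma coder_gbr m n f g : coder pi Delta m f -> coder pi Delta n g ->
  coder pi Delta (m + n) (gbr m n f g).
Proof.
move=> cf cg; have gfg := gmap_gbr grading_pi cf.1 cg.1.
apply/coderP; split=> // b hb i j x.
have pi_fg l v : pi l (gbr m n f g v) =
    (- (-1) ^ (m * n)) *: g (f (pi (l - m - n) v)) + f (g (pi (l - m - n) v)).
  by rewrite (pi_gmap grading_pi _ _ gfg) gbrE opprD addrA.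
rewrite (eq_pairing _ _ (frefl (pi i)) (pi_fg j)) (eq_pairing _ _ (pi_fg i) (frefl (pi j))).
rewrite gbrE (pairing_lin _ _ _ hb (lin_pi i) (lin_pi j)).
rewrite pairing_lincombl // pairing_lincombr //.
rewrite (coder_comp i j x cf cg hb) (coder_comp i j x cg cf hb).
have nm l : l - n - m = l - m - n by rewrite addrAC.
rewrite !nm (mulrBr n) (mulrBr m) (mulrDl m n i) !signD !signN (mulrC n m).
by case: (sign_cases k (m * n)) => ->; ring.
Qed.

Lemma coder_dEnd delta m f : coder pi Delta 1 delta -> coder pi Delta m f ->
  coder pi Delta (m + 1) (dEnd delta m f).
Proof. by move=> cd cf; rewrite dEnd_bracket addrC; apply: coder_gbr. Qed.

End Coderivations.

Theorem mainTheorem4 (k : fieldType) (C : lmodType k) (pi : int -> C -> C)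
    (Delta : C -> seq (C * C)) (delta : C -> C) (N : nat) :
  [pchar k] =i pred0 ->
  N_codiff pi Delta delta N ->
  (* 1. End(C) is a (2N-1)-differential graded algebra *)
  (gmap pi 0 id /\
      (forall (m n : int) f g, gmap pi m f -> gmap pi n g -> gmap pi (m + n) (f \o g)) /\
      (forall (m : int) f, gmap pi m f -> gmap pi (m + 1) (dEnd delta m f)) /\
      (forall (m : int) f g (a : k), gmap pi m f -> gmap pi m g ->
         dEnd delta m (fun x => a *: f x + g x)
         =1 (fun x => a *: dEnd delta m f x + dEnd delta m g x)) /\
      (forall (m n : int) f g, gmap pi m f -> gmap pi n g ->
         dEnd delta (m + n) (f \o g)
         =1 (fun x => dEnd delta m f (g x) + (-1) ^ m *: f (dEnd delta n g x))) /\
      (forall (m : int) f, gmap pi m f -> dpow delta m (2 * N).-1 f =1 (fun _ => 0)))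
  /\
  (* 2. Coder(C) with the graded commutator is a (2N-1)-differential graded Lie algebra *)
  ((forall (m : int), coder pi Delta m (fun _ => 0)) /\
      (forall (m : int) f g (a : k), coder pi Delta m f -> coder pi Delta m g ->
         coder pi Delta m (fun x => a *: f x + g x)) /\
      (forall (m n : int) f g, coder pi Delta m f -> coder pi Delta n g ->
         coder pi Delta (m + n) (gbr m n f g)) /\
      (forall (m n : int) f g, coder pi Delta m f -> coder pi Delta n g ->
         gbr m n f g =1 (fun x => - ((-1) ^ (m * n) *: gbr n m g f x))) /\
      (forall (m n p : int) f g h, coder pi Delta m f -> coder pi Delta n g ->
         coder pi Delta p h ->
         (fun x => (-1) ^ (m * p) *: gbr m (n + p) f (gbr n p g h) x
                 + (-1) ^ (n * m) *: gbr n (p + m) g (gbr p m h f) x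
                 + (-1) ^ (p * n) *: gbr p (m + n) h (gbr m n f g) x) =1 (fun _ => 0)) /\
      (forall (m : int) f, coder pi Delta m f -> coder pi Delta (m + 1) (dEnd delta m f)) /\
      (forall (m n : int) f g, coder pi Delta m f -> coder pi Delta n g ->
         dEnd delta (m + n) (gbr m n f g)
         =1 (fun x => gbr (m + 1) n (dEnd delta m f) g x
                      + (-1) ^ m *: gbr m (n + 1) f (dEnd delta n g) x)) /\
      (forall (m : int) f, coder pi Delta m f -> dpow delta m (2 * N).-1 f =1 (fun _ => 0))).
Proof.
Proof.
move=> _ [coalg coder_delta deltaN].
have [[delta_lin _] _] := coder_delta.
have nilpotent m f : gmap pi m f -> dpow delta m (2 * N).-1 f =1 (fun _ => 0).
  by move=> [hf _]; apply: dpow_nilpotent.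
have grading_pi : grading pi by case: coalg.
split.
  split; first exact: gmap_id.
  split; first by move=> m n f g; apply: gmap_comp.
  split; first by move=> m f; apply: gmap_dEnd coder_delta.1.
  split; first by move=> m f g a _ _; apply: dEnd_lincomb.
  split; first by move=> m n f g [hf _] _; apply: dEnd_comp.
  exact: nilpotent.
split; first exact: coder0.
split; first by move=> m f g a; apply: coder_lincomb.
split; first by move=> m n f g; apply: coder_gbr.
split; first by move=> m n f g _ _; apply: gbr_antisym.
split.
  by move=> m n p f g h [[hf _] _] [[hg _] _] [[hh _] _]; apply: gbr_jacobi.
split; first by move=> m f; apply: coder_dEnd.
split; first by move=> m n f g [[hf _] _] [[hg _] _]; apply: dEnd_gbr.
by move=> m f [gf _]; apply: nilpotent.
Qed.
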